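(* Let $M$ be a reduced irreducible affine scheme of finite type over $\mathbb C$ and let $\Gamma$ be a finitely presented group acting on $M$ by algebraic automorphisms. If there is one point of $M$ whose $\Gamma$-orbit is Zariski dense in $M$, then there is a countable union of proper closed subvarieties of $M$ such that every point $x\in M$ not lying in this countable union has Zariski dense $\Gamma$-orbit. *)

(* Complex numbers are modelled as C := R[i] = complex R for
   R : realType (MathComp-Analysis' complete archimedean real-closed field,
   i.e. the reals); affine varieties are given by polynomial equations in
   {mpoly C[n]} (multinomials). *)
From HB Require Import structures.
From mathcomp Require Import all_boot all_algebra.
From mathcomp Require Import reals.
From mathcomp Require Import complex.
From mathcomp Require Import mpoly.

Set Implicit Arguments.
Unset Strict Implicit.
Unset Printing Implicit Defensive.

Import GRing.Theory.
Local Open Scope ring_scope.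

Section AffineGeometry.
Variables (R : realType) (n : nat).
Local Notation C := (R[i]).
Local Notation pt := ('I_n -> C).
Local Notation cpoly := {mpoly C[n]}.

Definition zero_locus (S : cpoly -> Prop) : pt -> Prop :=
  fun x => forall p, S p -> p.@[x] = 0.

(* Complex points of the affine scheme Spec (C[x_1..x_n] / <I>). *)
Definition variety (I : seq cpoly) : pt -> Prop :=
  zero_locus (fun p => p \in I).

Definition in_ideal (I : seq cpoly) (p : cpoly) : Prop :=
  exists cs : seq cpoly, size cs = size I /\
    p = \sum_(j < size I) cs`_j * I`_j.

(* The ideal <I> is radical, i.e. C[x]/<I> is reduced. *)
Definition radical_ideal (I : seq cpoly) : Prop :=
  forall (p : cpoly) (k : nat), in_ideal I (p ^+ k) -> in_ideal I p.

Definition zariski_irreducible (M : pt -> Prop) : Prop :=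
  (exists x, M x) /\
  forall S1 S2 : cpoly -> Prop,
    (forall x, M x -> zero_locus S1 x \/ zero_locus S2 x) ->
    (forall x, M x -> zero_locus S1 x) \/ (forall x, M x -> zero_locus S2 x).

Definition regular_on (M : pt -> Prop) (f : pt -> pt) : Prop :=
  exists F : 'I_n -> cpoly, forall x, M x -> forall j, f x j = (F j).@[x].

Definition zariski_dense_in (M A : pt -> Prop) : Prop :=
  forall p : cpoly, (forall y, A y -> p.@[y] = 0) ->
                    (forall y, M y -> p.@[y] = 0).

End AffineGeometry.

Section Groups.
Local Open Scope group_scope.
Variable G : groupType.

(* Words in k generators and their inverses: (i, false) = g_i, (i, true) = g_i^-1. *)
Definition word (k : nat) := seq ('I_k * bool).

Definition eval_word (k : nat) (gens : 'I_k -> G) (w : word k) : G :=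
  foldr (fun a acc => (if a.2 then (gens a.1)^-1 else gens a.1) * acc) 1 w.

(* Congruence on words generated by free cancellation and the relators;
   w ~ [::] iff w lies in the normal closure of the relators in the free group. *)
Inductive rel_equiv (k : nat) (rels : seq (word k)) : word k -> word k -> Prop :=
| re_refl w : rel_equiv rels w w
| re_sym u v : rel_equiv rels u v -> rel_equiv rels v u
| re_trans u v w : rel_equiv rels u v -> rel_equiv rels v w -> rel_equiv rels u w
| re_cancel u v (i : 'I_k) (b : bool) :
    rel_equiv rels (u ++ (i, b) :: (i, ~~ b) :: v) (u ++ v)
| re_relator u v r : r \in rels -> rel_equiv rels (u ++ r ++ v) (u ++ v).

Definition finitely_presented : Prop :=
  exists (k : nat) (gens : 'I_k -> G) (rels : seq (word k)),
    (forall g : G, exists w : word k, eval_word gens w = g) /\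
    (forall r, r \in rels -> eval_word gens r = 1) /\
    (forall w : word k, eval_word gens w = 1 -> rel_equiv rels w [::]).

End Groups.

Section Action.
Local Open Scope group_scope.
Variables (R : realType) (n : nat) (G : groupType).
Local Notation pt := ('I_n -> R[i]).

Definition algebraic_action (M : pt -> Prop) (act : G -> pt -> pt) : Prop :=
  [/\ forall g x, M x -> M (act g x),
      forall x, M x -> act 1 x = x,
      forall g h x, M x -> act (g * h) x = act g (act h x)
    & forall g, regular_on M (act g)].

Definition act_orbit (act : G -> pt -> pt) (x : pt) : pt -> Prop :=
  fun y => exists g, y = act g x.

End Action.

From HB Require Import structures.
From mathcomp Require Import all_boot all_algebra.
From mathcomp Require Import reals.
From mathcomp Require Import complex.
From mathcomp Require Import mpoly.
From Stdlib Require Import Classical.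

Set Implicit Arguments.
Unset Strict Implicit.
Unset Printing Implicit Defensive.
Import GRing.Theory.
Local Open Scope ring_scope.

(* For each d let W_d be the span of the rows (m(y))_m of values of the
   monomials of degree < d at the points y of M.  A polynomial of degree < d
   vanishing on the orbit of x vanishes on M as soon as the rows at finitely
   many orbit points g_1 x, ..., g_k x span W_d.  Density of the orbit of x0
   provides such g_i for x0.  Since each g acts by a polynomial map, the set of
   x for which no such g_i exist is cut out by the (dim W_d)-minors of these
   matrices of rows, which are polynomials in x; it is proper because x0 avoids
   it, and outside the union over d of these sets every orbit is dense. *)

Section RowSpans.
Variable F : fieldType.

Lemma row_sub_of_family (T : Type) m k (v : T -> 'rV[F]_m) (t : 'I_k -> T) i :
  (v (t i) <= \matrix_j v (t j))%MS.
Proof. by rewrite -(rowK (fun j => v (t j)) i) row_sub. Qed.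

Lemma finite_row_span (T : Type) m (v : T -> 'rV[F]_m) :
  exists k (t : 'I_k -> T), forall s, (v s <= \matrix_i v (t i))%MS.
Proof.
apply: NNPP => no_span.
suff rank_unbounded r :
    exists k (t : 'I_k -> T), (r <= \rank (\matrix_i v (t i)))%N.
  have [k [t]] := rank_unbounded m.+1.
  by rewrite ltnNge rank_leq_col.
elim: r => [|r [k [t le_r]]]; first by exists 0%N, (ffun0 (card_ord 0)).
have [s not_sub] : exists s, ~~ (v s <= \matrix_i v (t i))%MS.
  apply: NNPP => all_sub; apply: no_span; exists k, t => s.
  by apply: contraT => not_sub; case: all_sub; exists s.
pose t' (i : 'I_k.+1) := if unlift ord_max i is Some j then t j else s.
exists k.+1, t'; apply: leq_ltn_trans le_r _; apply: rank_ltmx.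
have t'_lift i : t' (lift ord_max i) = t i by rewrite /t' liftK.
have t'_max : t' ord_max = s by rewrite /t' unlift_none.
rewrite ltmxE; apply/andP; split.
  by apply/row_subP => i; rewrite rowK -t'_lift row_sub_of_family.
apply: contra not_sub => sub; apply: submx_trans sub.
by rewrite -t'_max row_sub_of_family.
Qed.

Lemma rank_geq_of_unit_mul r k m (B : 'M[F]_(k, m))
    (K1 : 'M_(r, k)) (K2 : 'M_(m, r)) :
  K1 *m B *m K2 \in unitmx -> (r <= \rank B)%N.
Proof.
move=> unit_mul; rewrite -(mxrank_unit unit_mul).
exact: leq_trans (mxrankM_maxl _ _) (mxrankM_maxr _ _).
Qed.

Lemma exists_mul_rank_eq1 k m (B : 'M[F]_(k, m)) :
  exists K1 K2, K1 *m B *m K2 = 1%:M :> 'M_(\rank B).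
Proof.
have := mulmx_ebase B; have := col_ebase_unit B; have := row_ebase_unit B.
set L := col_ebase B; set U := row_ebase B; set r := \rank B.
move=> unit_U unit_L ebase_B.
exists (pid_mx r *m invmx L), (invmx U *m pid_mx r).
rewrite -[X in _ *m X *m _]ebase_B !mulmxA (mulmxKV unit_L) (mulmxK unit_U).
by rewrite pid_mx_id ?rank_leq_row // pid_mx_id ?rank_leq_col // pid_mx_1.
Qed.

End RowSpans.

Section MonomialRows.
Variables (F : fieldType) (n : nat).
Local Notation pt := ('I_n -> F).
Local Notation poly := {mpoly F[n]}.

Definition nmonom d := #|{: 'X_{1..n < d}}|.

Definition monom_of d (j : 'I_(nmonom d)) : 'X_{1..n} := bmnm (enum_val j).

Definition monom_row d (y : pt) : 'rV[F]_(nmonom d) :=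
  \row_j ('X_[monom_of j]).@[y].

Definition monom_mx d k (ys : 'I_k -> pt) : 'M[F]_(k, nmonom d) :=
  \matrix_i monom_row d (ys i).

Definition coef_col d (q : poly) : 'cV[F]_(nmonom d) := \col_j q@_(monom_of j).

Definition poly_of_col d (c : 'cV[F]_(nmonom d)) : poly :=
  \sum_j c j 0 *: 'X_[monom_of j].

Lemma meval_poly_of_col d c z :
  (poly_of_col c).@[z] = (monom_row d z *m c) 0 0.
Proof.
rewrite raddf_sum /= mxE; apply: eq_bigr => j _.
by rewrite mevalZ mxE mulrC.
Qed.

Lemma poly_of_colK d q : (msize q <= d)%N -> poly_of_col (coef_col d q) = q.
Proof.
move=> size_q; rewrite [RHS](mpolywE size_q).
rewrite (big_enum_val (fun m : 'X_{1..n < d} => _)) /=.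
by apply: eq_bigr => j _; rewrite mxE.
Qed.

Lemma meval_eq0_of_monom_row_sub d k (ys : 'I_k -> pt) q y :
  (msize q <= d)%N -> (forall i, q.@[ys i] = 0) ->
  (monom_row d y <= monom_mx d ys)%MS -> q.@[y] = 0.
Proof.
move=> size_q vanish /submxP[w row_y].
have rows_eq0 : monom_mx d ys *m coef_col d q = 0.
  apply/row_matrixP => i; rewrite row_mul rowK row0; apply/rowP => j.
  by rewrite ord1 -meval_poly_of_col poly_of_colK // vanish mxE.
rewrite -(poly_of_colK size_q) meval_poly_of_col row_y -mulmxA rows_eq0.
by rewrite mulmx0 mxE.
Qed.

Definition monom_polymx d k (Fs : 'I_k -> 'I_n -> poly)
    : 'M[poly]_(k, nmonom d) :=
  \matrix_(i, j) \prod_(l < n) Fs i l ^+ monom_of j l.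

Definition minor_poly d k r (Fs : 'I_k -> 'I_n -> poly)
    (K1 : 'M[F]_(r, k)) (K2 : 'M[F]_(nmonom d, r)) : poly :=
  \det (map_mx (fun c => c%:MP) K1 *m monom_polymx d Fs *m
        map_mx (fun c => c%:MP) K2).
Arguments minor_poly d {k r}.

Lemma meval_minor_poly d k r (Fs : 'I_k -> 'I_n -> poly)
    (K1 : 'M_(r, k)) (K2 : 'M_(nmonom d, r)) x :
  (minor_poly d Fs K1 K2).@[x] =
  \det (K1 *m monom_mx d (fun i l => (Fs i l).@[x]) *m K2).
Proof.
rewrite /minor_poly -det_map_mx !map_mxM; congr (\det (_ *m _ *m _)).
- by apply/matrixP => i j; rewrite !mxE; exact: mevalC.
- apply/matrixP => i j; rewrite !mxE mevalX rmorph_prod.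
  by apply: eq_bigr => l _; rewrite rmorphXn.
- by apply/matrixP => i j; rewrite !mxE; exact: mevalC.
Qed.

End MonomialRows.

Arguments minor_poly {F n} d {k r}.

Section OrbitRank.
Variables (R : realType) (n : nat) (G : groupType).
Local Notation pt := ('I_n -> R[i]).
Local Notation cpoly := {mpoly R[i][n]}.
Variables (M : pt -> Prop) (act : G -> pt -> pt).

Lemma exists_nonzero_off_zero_locus (S : cpoly -> Prop) x :
  ~ zero_locus S x -> exists2 p, S p & p.@[x] != 0.
Proof.
move=> off; apply: NNPP => all_zero; apply: off => p Sp.
by apply/eqP; apply: contraT => p_x; case: all_zero; exists p.
Qed.

Lemma monom_row_sub_of_dense d k (B : 'M[R[i]]_(k, nmonom n d))
    (A : pt -> Prop) :
  zariski_dense_in M A -> (forall z, A z -> (monom_row d z <= B)%MS) ->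
  forall y, M y -> (monom_row d y <= B)%MS.
Proof.
move=> dense A_sub y My; rewrite submxE; apply/eqP/rowP => c.
have col_entry z : (monom_row d z *m cokermx B) 0 c
                  = (poly_of_col (col c (cokermx B))).@[z].
  by rewrite meval_poly_of_col !mxE; apply: eq_bigr => j _; rewrite !mxE.
rewrite [RHS]mxE col_entry; apply: dense My => z Az; rewrite -col_entry.
by move: (A_sub z Az); rewrite submxE => /eqP ->; rewrite mxE.
Qed.

Definition orbit_mx d k (gs : 'I_k -> G) (x : pt) : 'M[R[i]]_(k, nmonom n d) :=
  monom_mx d (fun i => act (gs i) x).

Definition spans_monom_rows d k (B : 'M[R[i]]_(k, nmonom n d)) : Prop :=
  forall y, M y -> (monom_row d y <= B)%MS.

Definition orbit_minor d r (p : cpoly) : Prop :=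
  exists k (gs : 'I_k -> G) (Fs : 'I_k -> 'I_n -> cpoly)
         (K1 : 'M_(r, k)) (K2 : 'M_(nmonom n d, r)),
    (forall i y, M y -> forall j, act (gs i) y j = (Fs i j).@[y]) /\
    p = minor_poly d Fs K1 K2.

(* As B ranges over all spanning matrices, the zero locus is exactly the set
   of x at which the orbit rows span a space of dimension < dim W_d. *)
Definition orbit_rank_drop d (p : cpoly) : Prop :=
  exists k (B : 'M[R[i]]_(k, nmonom n d)),
    spans_monom_rows B /\ orbit_minor d (\rank B) p.

Hypothesis act_stable : forall g x, M x -> M (act g x).
Hypothesis act_regular : forall g, regular_on M (act g).

Lemma spans_orbit_mx_of_dense d x0 :
  zariski_dense_in M (act_orbit act x0) ->
  exists k (gs : 'I_k -> G), spans_monom_rows (orbit_mx d gs x0).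
Proof.
move=> dense.
have [k [gs span]] := finite_row_span (fun g => monom_row d (act g x0)).
exists k, gs; apply: (@monom_row_sub_of_dense d k (orbit_mx d gs x0) _ dense).
by move=> _ [g ->]; apply: span.
Qed.

Lemma meval_orbit_minor d k r (gs : 'I_k -> G) (Fs : 'I_k -> 'I_n -> cpoly)
    (K1 : 'M_(r, k)) (K2 : 'M_(nmonom n d, r)) x :
  (forall i y, M y -> forall j, act (gs i) y j = (Fs i j).@[y]) -> M x ->
  (minor_poly d Fs K1 K2).@[x] = \det (K1 *m orbit_mx d gs x *m K2).
Proof.
move=> Fs_act Mx; rewrite meval_minor_poly.
suff -> : orbit_mx d gs x = monom_mx d (fun i l => (Fs i l).@[x]) by [].
apply/matrixP => i j; rewrite !mxE !mevalX.
by apply: eq_bigr => l _; rewrite Fs_act.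
Qed.

Lemma orbit_minor_rank d r p x :
  orbit_minor d r p -> M x -> p.@[x] != 0 ->
  exists k (gs : 'I_k -> G), (r <= \rank (orbit_mx d gs x))%N.
Proof.
move=> [k [gs [Fs [K1 [K2 [Fs_act ->]]]]]] Mx minor_x.
exists k, gs; apply: (@rank_geq_of_unit_mul _ _ _ _ _ K1 K2).
by rewrite unitmxE unitfE -(meval_orbit_minor _ _ Fs_act Mx).
Qed.

Lemma exists_orbit_minor d k (gs : 'I_k -> G) x :
  M x -> exists2 p, orbit_minor d (\rank (orbit_mx d gs x)) p & p.@[x] != 0.
Proof.
move=> Mx; have [Fs Fs_act] := fin_all_exists (fun i => act_regular (gs i)).
have [K1 [K2 mul_eq1]] := exists_mul_rank_eq1 (orbit_mx d gs x).
exists (minor_poly d Fs K1 K2); first by exists k, gs, Fs, K1, K2.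
by rewrite (meval_orbit_minor _ _ Fs_act Mx) mul_eq1 det1 oner_neq0.
Qed.

Lemma orbit_rank_drop_proper d x0 :
  zariski_dense_in M (act_orbit act x0) -> M x0 ->
  ~ zero_locus (orbit_rank_drop d) x0.
Proof.
move=> dense Mx0 vanish.
have [k [gs span]] := spans_orbit_mx_of_dense d dense.
have [p minor_p p_x0] := exists_orbit_minor d gs Mx0.
by move/eqP: p_x0; apply; apply: vanish; exists k, (orbit_mx d gs x0).
Qed.

Lemma dense_orbit_off_rank_drop x :
  M x -> (forall d, ~ zero_locus (orbit_rank_drop d) x) ->
  zariski_dense_in M (act_orbit act x).
Proof.
move=> Mx off q vanish y My; set d := msize q.
have [p [k [B [span minor_p]]] p_x] := exists_nonzero_off_zero_locus (off d).
have [k' [gs rank_le]] := orbit_minor_rank minor_p Mx p_x.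
have orbit_sub : (orbit_mx d gs x <= B)%MS.
  by apply/row_subP => i; rewrite rowK; apply/span/act_stable.
have /andP[_ sub_orbit] : (orbit_mx d gs x == B)%MS.
  by rewrite -(mxrank_leqif_eq orbit_sub).2 eqn_leq rank_le mxrankS.
apply: (meval_eq0_of_monom_row_sub (leqnn d)) => [i|].
  by apply: vanish; exists (gs i).
exact: submx_trans (span y My) sub_orbit.
Qed.

End OrbitRank.

Theorem lemma2p1 (R : realType) (n : nat) (I : seq {mpoly R[i][n]})
    (G : groupType) (act : G -> ('I_n -> R[i]) -> ('I_n -> R[i])) :
  radical_ideal I ->
  zariski_irreducible (variety I) ->
  finitely_presented G ->
  algebraic_action (variety I) act ->
  (exists x0, variety I x0 /\ zariski_dense_in (variety I) (act_orbit act x0)) ->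
  exists Z : nat -> ({mpoly R[i][n]} -> Prop),
    (forall m, exists y, variety I y /\ ~ zero_locus (Z m) y) /\
    (forall x, variety I x -> (forall m, ~ zero_locus (Z m) x) ->
       zariski_dense_in (variety I) (act_orbit act x)).
Proof.
move=> _ _ _ [stable _ _ regular] [x0 [Mx0 dense]].
exists (orbit_rank_drop (variety I) act); split.
  by move=> d; exists x0; split => //; apply: orbit_rank_drop_proper.
by move=> x Mx; apply: dense_orbit_off_rank_drop.
Qed.
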